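(* Let $X$ be a graph with real symmetric Hamiltonian $M$ and transition matrix $U(t)=e^{-\mathrm{i}tM}$. Let $a\ne b$ be cospectral vertices of $X$ and $s\in\mathbb{C}\setminus\{0\}$. If $\mathbf e_a+s\mathbf e_b$ is periodic at time $\tau$, i.e. $U(\tau)(\mathbf e_a+s\mathbf e_b)=\eta(\mathbf e_a+s\mathbf e_b)$ for some $|\eta|=1$, then either $s=\pm1$, or both $a$ and $b$ are periodic at time $\tau$, i.e. $U(\tau)\mathbf e_a=\eta\mathbf e_a$ and $U(\tau)\mathbf e_b=\eta\mathbf e_b$.
   Context: Vertices $a,b$ are cospectral (with respect to $M$) if $(M^h)_{a,a}=(M^h)_{b,b}$ for all integers $h\ge0$, equivalently $(E_\lambda)_{a,a}=(E_\lambda)_{b,b}$ for every spectral projection $E_\lambda$ of $M$. *)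

From HB Require Import structures.
From mathcomp Require Import all_boot all_order all_algebra.
From mathcomp Require Import all_classical all_reals all_analysis.
From mathcomp Require Import complex.
Set Implicit Arguments. Unset Strict Implicit. Unset Printing Implicit Defensive.
Import Order.TTheory GRing.Theory Num.Theory.
Import numFieldNormedType.Exports.
Local Open Scope ring_scope.
Local Open Scope complex_scope.

Definition cmx (R : realType) (n : nat) (M : 'M[R]_n) : 'M[R[i]]_n :=
  map_mx (fun x => x%:C) M.

Definition expterm (R : realType) (n : nat) (M : 'M[R]_n) (t : R)
  (a b : 'I_n) (k : nat) : R[i] :=
  ((- 'i * t%:C) ^+ k / (k`!)%:R) * ((cmx M) ^+ k) a b.

(* Transition matrix U(t) = exp(-i t M), defined entrywise as the (convergent)
   exponential power series; real and imaginary parts are summed separately. *)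
Definition transU (R : realType) (n : nat) (M : 'M[R]_n) (t : R) : 'M[R[i]]_n :=
  \matrix_(a, b)
    ((limn (series (fun k => complex.Re (expterm M t a b k)))) +i*
     (limn (series (fun k => complex.Im (expterm M t a b k))))).

Definition evec (R : realType) (n : nat) (a : 'I_n) : 'cV[R[i]]_n :=
  \col_j (if j == a then 1 else 0).

Definition cospectral (R : realType) (n : nat) (M : 'M[R]_n) (a b : 'I_n) : Prop :=
  forall h : nat, (M ^+ h) a a = (M ^+ h) b b.
Arguments evec {R n} a.

(* U(tau) is symmetric, because every power of M is; it is unitary, because an
   orthonormal eigenbasis of M diagonalises it with eigenvalues e^{-i tau lambda};
   and U(tau)_aa = U(tau)_bb, because a and b are cospectral.  Comparing the a- and
   b-coordinates of U(tau)(e_a + s e_b) = eta (e_a + s e_b) then yields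
   U(tau)_ab (1 - s^2) = 0.  If s <> 1, -1, then U(tau)_ab = 0, so
   U(tau)_aa = U(tau)_bb = eta has modulus 1, and unitarity forces the remaining
   entries of rows a and b, hence by symmetry of columns a and b, to vanish. *)

From HB Require Import structures.
From mathcomp Require Import all_boot all_order all_algebra.
From mathcomp Require Import all_classical all_reals all_analysis.
From mathcomp Require Import complex ring.
Set Implicit Arguments. Unset Strict Implicit. Unset Printing Implicit Defensive.
Import Order.TTheory GRing.Theory Num.Theory.
Import numFieldNormedType.Exports.
Local Open Scope ring_scope.
Local Open Scope complex_scope.

Lemma unitarymx_row_eq0 (C : numClosedFieldType) n (U : 'M[C]_n) (a j : 'I_n) :
  U \is unitarymx -> `|U a a| = 1 -> j != a -> U a j = 0.
Proof.
move=> /unitarymxP /matrixP /(_ a a); rewrite !mxE eqxx /= => rowa Uaa ja.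
have : \sum_k `|U a k| ^+ 2 = 1.
  by rewrite -[RHS]rowa; apply: eq_bigr => k _; rewrite normCK !mxE.
rewrite (bigD1 a) //= Uaa expr1n -[RHS]addr0 => /addrI.
move=> /(psumr_eq0P (fun k _ => exprn_ge0 2 (normr_ge0 (U a k)))) /(_ j ja) /eqP.
by rewrite sqrf_eq0 normr_eq0 => /eqP.
Qed.

Lemma trmxX (C : comPzRingType) n (A : 'M[C]_n) k : (A ^+ k)^T = A^T ^+ k.
Proof.
elim: k => [|k IHk]; first by rewrite !expr0 trmx1.
by rewrite exprS -mulmxE trmx_mul IHk mulmxE -exprSr.
Qed.

Lemma expmx_conj_diag (C : comUnitRingType) n (P : 'M[C]_n) (d : 'rV[C]_n) k :
  P \in unitmx ->
  (invmx P *m diag_mx d *m P) ^+ k = invmx P *m diag_mx (\row_l d 0 l ^+ k) *m P.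
Proof.
move=> Pu; elim: k => [|k IHk].
  rewrite expr0 (_ : \row_l _ = const_mx 1); last by apply/rowP => l; rewrite !mxE.
  by rewrite diag_const_mx mulmx1 mulVmx.
rewrite exprSr -mulmxE IHk !mulmxA mulmxK // -[_ *m diag_mx d]mulmxA mulmx_diag.
by congr (_ *m diag_mx _ *m _); apply/rowP => l; rewrite !mxE exprSr.
Qed.

Section BasisVectors.
Variables (R : realType) (n : nat).
Implicit Types (U : 'M[R[i]]_n) (a b : 'I_n) (s eta : R[i]).

Lemma mul_evec U a : U *m evec a = col a U.
Proof.
by rewrite colE; congr (_ *m _); apply/colP => j; rewrite !mxE eqxx andbT; case: eqP.
Qed.

Lemma sym_unitarymx_mul_evec U a :
  U^T = U -> U \is unitarymx -> `|U a a| = 1 -> U *m evec a = U a a *: evec a.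
Proof.
move=> Usym Uu Uaa; apply/colP => j; rewrite mul_evec !mxE.
case: eqVneq => [->|ja]; first by rewrite mulr1.
have -> : U j a = U a j by rewrite -{1}Usym mxE.
by rewrite unitarymx_row_eq0 // mulr0.
Qed.

Lemma sym_mul_evec_pair U a b s eta :
  U^T = U -> U a a = U b b -> a != b ->
  U *m (evec a + s *: evec b) = eta *: (evec a + s *: evec b) ->
  U a a + s * U a b = eta /\ U a b * (1 - s ^+ 2) = 0.
Proof.
move=> Usym Uab ab eigen.
have coord j : U j a + s * U j b =
    eta * ((if j == a then 1 else 0) + s * (if j == b then 1 else 0)).
  by have /colP/(_ j) := eigen; rewrite mulmxDr -scalemxAr !mul_evec !mxE.
have := coord b; have := coord a.
rewrite !eqxx [b == a]eq_sym (negPf ab) /= !(mulr0, mulr1, addr0, add0r).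
move=> coord_a coord_b.
have Uba : U a b = U b a by rewrite -{1}Usym mxE.
split=> //; rewrite Uba; rewrite Uab Uba in coord_a.
have -> : U b a * (1 - s ^+ 2) = (U b a + s * U b b) - s * (U b b + s * U b a).
  by ring.
by rewrite coord_a coord_b mulrC subrr.
Qed.

Lemma sym_unitarymx_periodic_pair U a b s eta :
  U^T = U -> U \is unitarymx -> U a a = U b b -> a != b -> `|eta| = 1 ->
  U *m (evec a + s *: evec b) = eta *: (evec a + s *: evec b) ->
  (s = 1 \/ s = -1) \/ (U *m evec a = eta *: evec a /\ U *m evec b = eta *: evec b).
Proof.
move=> Usym Uu Uab ab eta1 eigen.
have [Ua Ucross] := sym_mul_evec_pair Usym Uab ab eigen.
have [/eqP|s2N1] := eqVneq (s ^+ 2) 1.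
  by rewrite sqrf_eq1 => /orP[] /eqP ->; left; [left|right].
right.
have Uab0 : U a b = 0.
  move/eqP: Ucross; rewrite mulf_eq0 subr_eq0 [1 == _]eq_sym (negPf s2N1) orbF.
  by move/eqP.
have Uaa : U a a = eta by rewrite -Ua Uab0 mulr0 addr0.
have Ubb : U b b = eta by rewrite -Uab.
have Uaa1 : `|U a a| = 1 by rewrite Uaa.
have Ubb1 : `|U b b| = 1 by rewrite Ubb.
by rewrite !sym_unitarymx_mul_evec // Uaa Ubb.
Qed.

End BasisVectors.

Section ComplexSeries.
Local Open Scope classical_set_scope.
Variable R : realType.
Implicit Types (v : nat -> R[i]) (l w : R[i]) (th : R).

(* Convergence of a complex sequence through its real and imaginary parts, the
   form in which [transU] is defined. *)
Definition cvgReIm v l : Prop :=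
  (fun N => complex.Re (v N)) @ \oo --> complex.Re l /\
  (fun N => complex.Im (v N)) @ \oo --> complex.Im l.

Lemma cvgReImD v1 v2 l1 l2 :
  cvgReIm v1 l1 -> cvgReIm v2 l2 -> cvgReIm (fun N => v1 N + v2 N) (l1 + l2).
Proof.
have ReD (x y : R[i]) : complex.Re (x + y) = complex.Re x + complex.Re y.
  by case: x y => [? ?] [? ?].
have ImD (x y : R[i]) : complex.Im (x + y) = complex.Im x + complex.Im y.
  by case: x y => [? ?] [? ?].
move=> [Re1 Im1] [Re2 Im2]; split.
- by rewrite ReD; under eq_fun do rewrite ReD; exact: cvgD.
- by rewrite ImD; under eq_fun do rewrite ImD; exact: cvgD.
Qed.

Lemma cvgReIm_sum (I : Type) (r : seq I) (v : I -> nat -> R[i]) (l : I -> R[i]) :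
  (forall i, cvgReIm (v i) (l i)) ->
  cvgReIm (fun N => \sum_(i <- r) v i N) (\sum_(i <- r) l i).
Proof.
move=> cv; elim: r => [|i r IHr].
  by rewrite big_nil; split; under eq_fun do rewrite big_nil; exact: cvg_cst.
rewrite big_cons; under [fun N => _]eq_fun do rewrite big_cons.
exact: cvgReImD.
Qed.

Lemma cvgReImMl w v l : cvgReIm v l -> cvgReIm (fun N => w * v N) (w * l).
Proof.
case: w => x y [cvRe cvIm].
have ReM z : complex.Re ((x +i* y) * z) = x * complex.Re z - y * complex.Im z.
  by case: z.
have ImM z : complex.Im ((x +i* y) * z) = x * complex.Im z + y * complex.Re z.
  by case: z.
split; [rewrite ReM; under eq_fun do rewrite ReM; apply: cvgB
       |rewrite ImM; under eq_fun do rewrite ImM; apply: cvgD]; exact: cvgMl_tmp.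
Qed.

Lemma series_Re v : series (fun k => complex.Re (v k)) =
  fun N => complex.Re (series v N).
Proof.
by apply/funext => N; rewrite /series /= (raddf_sum (@complex.Re R : Rcomplex R -> R)).
Qed.

Lemma series_Im v : series (fun k => complex.Im (v k)) =
  fun N => complex.Im (series v N).
Proof.
by apply/funext => N; rewrite /series /= (raddf_sum (@complex.Im R : Rcomplex R -> R)).
Qed.

Definition expNi th : R[i] := cos th +i* - sin th.

Definition expNi_coeff th k : R[i] := (- 'i * th%:C) ^+ k / k`!%:R.

Lemma exprNi k : (- 'i : R[i]) ^+ k =
  ((~~ odd k)%:R * (-1) ^+ k./2)%:C + 'i * (- ((odd k)%:R * (-1) ^+ k.-1./2))%:C.
Proof.
have := odd_double_half k; set m := k./2; case: (odd k) => /= E.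
  have -> : k.-1./2 = m by rewrite -E /= half_double.
  rewrite -{1}E exprD expr1 -mul2n exprM sqrrN sqr_i.
  by rewrite !(rmorphN, rmorphXn, rmorph1, rmorphM, rmorph0, mul0r, mul1r); ring.
rewrite -{1}E add0n -mul2n exprM sqrrN sqr_i.
by rewrite !(rmorphN, rmorphXn, rmorph1, rmorphM, rmorph0, mul0r, mul1r); ring.
Qed.

Lemma expNi_coeffE th k : expNi_coeff th k = cos_coeff th k +i* - sin_coeff th k.
Proof.
have complexRI (x y : R) : x +i* y = x%:C + 'i * y%:C by rewrite [LHS]complexE.
rewrite complexRI /expNi_coeff exprMn exprNi cos_coeffE sin_coeffE /=.
rewrite !(rmorphN, rmorphXn, rmorph1, rmorphM, rmorph0, rmorph_nat, fmorphV).
by ring.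
Qed.

Lemma cvgReIm_expNi th : cvgReIm (series (expNi_coeff th)) (expNi th).
Proof.
split; rewrite /expNi /=; [rewrite -series_Re | rewrite -series_Im];
  under eq_fun do rewrite expNi_coeffE /=.
- by rewrite cos.unlock; exact: is_cvg_series_cos_coeff.
- rewrite (seriesN (sin_coeff th)); apply: cvgN.
  by rewrite sin.unlock; exact: is_cvg_series_sin_coeff.
Qed.

Lemma expNi_unit th : expNi th * (expNi th)^* = 1.
Proof. by rewrite -normCK -add_Re2_Im2 /= sqrrN cos2Dsin2. Qed.

End ComplexSeries.

Section TransitionMatrix.
Variables (R : realType) (n : nat) (M : 'M[R]_n) (t : R).

Lemma cmxX k : cmx (M ^+ k) = cmx M ^+ k.
Proof.
elim: k => [|k IHk]; first by rewrite !expr0 /cmx map_mx1.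
by rewrite !exprS -!mulmxE -IHk /cmx map_mxM.
Qed.

Lemma cmx_hermsym : M^T = M -> cmx M \is hermsymmx.
Proof.
move=> Msym; apply: realsym_hermsym.
  apply/is_hermitianmxP; rewrite expr0 scale1r map_mx_id //.
  by rewrite /cmx map_trmx Msym.
by apply/mxOverP => i j; rewrite mxE; apply/complex_realP; exists (M i j).
Qed.

Lemma transU_cvgReIm a b l :
  cvgReIm (series (expterm M t a b)) l -> transU M t a b = l.
Proof.
move=> [cvRe cvIm].
rewrite mxE (series_Re (expterm M t a b)) (series_Im (expterm M t a b)).
by rewrite (cvg_lim _ cvRe) // (cvg_lim _ cvIm) //; case: l {cvRe cvIm}.
Qed.

Lemma transU_eq a b c d :
  expterm M t a b =1 expterm M t c d -> transU M t a b = transU M t c d.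
Proof. by move=> /funext E; rewrite !mxE E. Qed.

Lemma transU_sym : M^T = M -> (transU M t)^T = transU M t.
Proof.
move=> Msym; have cmx_sym : (cmx M)^T = cmx M by rewrite /cmx map_trmx Msym.
apply/matrixP => j c; rewrite mxE; apply: transU_eq => k.
by rewrite /expterm -{1}cmx_sym -trmxX mxE.
Qed.

Lemma transU_cospectral a b : cospectral M a b -> transU M t a a = transU M t b b.
Proof. by move=> cs; apply: transU_eq => k; rewrite /expterm -cmxX /cmx !mxE cs. Qed.

Lemma transU_spectral : M^T = M ->
  transU M t = invmx (spectralmx (cmx M)) *m
    diag_mx (\row_l expNi (t * complex.Re (spectral_diag (cmx M) 0 l))) *m
    spectralmx (cmx M).
Proof.
move=> Msym; set P := spectralmx _; set d := spectral_diag _.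
have Mherm := cmx_hermsym Msym.
have Mspec : cmx M = invmx P *m diag_mx d *m P.
  exact/orthomx_spectralP/hermitian_normalmx.
have dR l : d 0 l = (complex.Re (d 0 l))%:C.
  by rewrite RRe_real //; exact: (mxOverP (hermitian_spectral_diag_real Mherm)).
apply/matrixP => j c; apply: transU_cvgReIm.
have expterm_spec k : expterm M t j c k =
    \sum_l (invmx P j l * P l c) * expNi_coeff (t * complex.Re (d 0 l)) k.
  rewrite /expterm Mspec expmx_conj_diag ?spectral_unit // mxE mulr_sumr.
  apply: eq_bigr => l _; rewrite mul_mx_diag !mxE (dR l) /expNi_coeff rmorphM !exprMn.
  by ring.
have -> : series (expterm M t j c) = fun N =>
    \sum_l (invmx P j l * P l c) * series (expNi_coeff (t * complex.Re (d 0 l))) N.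
  apply/funext => N; rewrite /series /=; under eq_bigr do rewrite expterm_spec.
  by rewrite exchange_big; apply: eq_bigr => l _; rewrite mulr_sumr.
rewrite mxE; apply: cvgReIm_sum => l.
by rewrite mul_mx_diag !mxE mulrAC; exact/cvgReImMl/cvgReIm_expNi.
Qed.

Lemma transU_unitary : M^T = M -> transU M t \is unitarymx.
Proof.
move=> Msym; rewrite transU_spectral //.
have Pu := spectral_unitarymx (cmx M).
apply: mul_unitarymx; [apply: mul_unitarymx|] => //.
  by rewrite invmx_unitary // trmxC_unitary.
apply/unitarymxP; rewrite tr_diag_mx map_diag_mx mulmx_diag -diag_const_mx.
by congr diag_mx; apply/rowP => l; rewrite !mxE expNi_unit.
Qed.

End TransitionMatrix.

Theorem mainTheorem3 (R : realType) (n : nat) (M : 'M[R]_n) (a b : 'I_n)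
  (s : R[i]) (tau : R) (eta : R[i]) :
  M^T = M -> a != b -> cospectral M a b -> s != 0 ->
  `|eta| = 1 ->
  transU M tau *m (evec a + s *: evec b) = eta *: (evec a + s *: evec b) ->
  (s = 1 \/ s = -1) \/
  (transU M tau *m evec a = eta *: evec a /\ transU M tau *m evec b = eta *: evec b).
Proof.
move=> Msym ab cs _ eta1 periodic.
apply: sym_unitarymx_periodic_pair => //.
- exact: transU_sym.
- exact: transU_unitary.
- exact: transU_cospectral.
Qed.
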